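(* Let $\mathbf A\in\mathbb C^{n\times n}$ with $\operatorname{Ind}\mathbf A=k$ and $\operatorname{rank}\mathbf A^{k+1}=\operatorname{rank}\mathbf A^{k}=r\le n$. Then the Drazin inverse $\mathbf A^{D}=(a^{D}_{ij})$ satisfies, for all $i,j=1,\dots,n$, \[ a^{D}_{ij}=\frac{\sum_{\alpha\in I_{r,n}\{j\}}\left|\left(\mathbf A^{k+1}_{j.}(\mathbf a^{(k)}_{i.})\right)^{\alpha}_{\alpha}\right|}{\sum_{\alpha\in I_{r,n}}\left|(\mathbf A^{k+1})^{\alpha}_{\alpha}\right|} \quad\text{and}\quad a^{D}_{ij}=\frac{\sum_{\beta\in J_{r,n}\{i\}}\left|\left(\mathbf A^{k+1}_{.i}(\mathbf a^{(k)}_{.j})\right)^{\beta}_{\beta}\right|}{\sum_{\beta\in J_{r,n}}\left|(\mathbf A^{k+1})^{\beta}_{\beta}\right|}, \] where $\mathbf a^{(k)}_{i.}$ and $\mathbf a^{(k)}_{.j}$ denote the $i$-th row and the $j$-th column of $\mathbf A^{k}$.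
   Context: All matrices are complex. $\operatorname{Ind}\mathbf A$ is the smallest nonnegative integer $k$ with $\operatorname{rank}\mathbf A^{k+1}=\operatorname{rank}\mathbf A^{k}$. The Drazin inverse $\mathbf A^{D}$ is the unique $\mathbf X$ with $\mathbf A^{k+1}\mathbf X=\mathbf A^{k}$, $\mathbf X\mathbf A\mathbf X=\mathbf X$, $\mathbf A\mathbf X=\mathbf X\mathbf A$, where $k=\operatorname{Ind}\mathbf A$. For a square matrix $\mathbf M$, $\mathbf M_{.i}(\mathbf c)$ (resp. $\mathbf M_{i.}(\mathbf c)$) is the matrix obtained from $\mathbf M$ by replacing its $i$-th column (resp. row) by the column (resp. row) vector $\mathbf c$. For $1\le k\le p$, $L_{k,p}$ is the set of strictly increasing sequences of $k$ elements of $\{1,\dots,p\}$; $I_{k,p}=J_{k,p}=L_{k,p}$, and $I_{k,p}\{i\}=J_{k,p}\{i\}=\{\alpha\in L_{k,p}:i\in\alpha\}$. $\mathbf M^{\alpha}_{\alpha}$ is the principal submatrix with rows and columns indexed by $\alpha$, and $|\cdot|$ denotes the determinant. *)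

From HB Require Import structures.
From mathcomp Require Import all_boot all_order all_algebra.
From mathcomp Require Import complex.
From mathcomp Require Import reals.
Set Implicit Arguments. Unset Strict Implicit. Unset Printing Implicit Defensive.
Import Order.TTheory GRing.Theory Num.Theory.
Local Open Scope ring_scope.

Section Defs.
Variable F : fieldType.
Variable n : nat.

(* existence of an index: the rank sequence of powers is nonincreasing and bounded,
   hence eventually stabilizes; we use a classical definition via ex_minn. *)
Lemma ind_exists (A : 'M[F]_n) :
  exists k, \rank (A ^+ k.+1) == \rank (A ^+ k).
Proof.
case: (boolP [exists m : 'I_n.+1, \rank (A ^+ m.+1) == \rank (A ^+ m)]).
  by case/existsP=> m Hm; exists m.
rewrite negb_exists => /forallP Hne; exfalso.
have key : forall m, (m <= n.+1)%N -> (\rank (A ^+ m) + m <= n)%N.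
  elim=> [|m IH] Hm; first by rewrite expr0 addn0 rank_leq_row.
  have Hm' : (m < n.+1)%N by [].
  have := Hne (Ordinal Hm') => /= Hneq.
  have Hle : (\rank (A ^+ m.+1) <= \rank (A ^+ m))%N.
    by rewrite exprSr mxrankM_maxl.
  have Hlt : (\rank (A ^+ m.+1) < \rank (A ^+ m))%N by rewrite ltn_neqAle Hneq Hle.
  have := IH (ltnW Hm); rewrite addnS; apply: leq_trans; by rewrite ltn_add2r.
by have := key n.+1 (leqnn _); rewrite addnS ltnNge leq_addl.
Qed.

Definition ind (A : 'M[F]_n) : nat := ex_minn (ind_exists A).

Definition is_drazin (A X : 'M[F]_n) : Prop :=
  let k := ind A in
  [/\ A ^+ k.+1 *m X = A ^+ k, X *m A *m X = X & A *m X = X *m A].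

Definition row_repl (M : 'M[F]_n) (i : 'I_n) (c : 'rV[F]_n) : 'M[F]_n :=
  \matrix_(p, q) (if p == i then c 0 q else M p q).

Definition col_repl (M : 'M[F]_n) (j : 'I_n) (c : 'cV[F]_n) : 'M[F]_n :=
  \matrix_(p, q) (if q == j then c p 0 else M p q).

Definition princ_sub (M : 'M[F]_n) (alpha : {set 'I_n}) : 'M[F]_#|alpha| :=
  \matrix_(p, q) M (enum_val p) (enum_val q).

End Defs.

From HB Require Import structures.
From mathcomp Require Import all_boot all_order all_algebra.
From mathcomp Require Import complex.
From mathcomp Require Import reals.
From mathcomp Require Import fingroup perm zify.
Import Order.TTheory GRing.Theory Num.Theory.
Local Open Scope ring_scope.
Set Implicit Arguments. Unset Strict Implicit. Unset Printing Implicit Defensive.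

(* Write B = A^(k+1), r = rank B, det (xI + B) = sum_s d_s x^s and
   adj (xI + B) = sum_s Q_s x^s.  Expanding the determinant along the diagonal,
   d_s is the sum of the principal minors of B of order n - s, and a Laplace
   expansion along the replaced row (column) turns the numerators of the theorem
   into the entries of A^k Q_(n-r) (of Q_(n-r) A^k).  Comparing coefficients in
   (xI + B) adj (xI + B) = det (xI + B) I gives Q_(s-1) + B Q_s = d_s I; as
   d_s = 0 for s < n - r, this forces B^s Q_(s-1) = 0 for s <= n - r, and A^D
   kills Q_(n-r-1) since A^D = (A^D)^(m+1) B^(n-r) for a suitable m.  Hence
   A^k Q_(n-r) = A^D B Q_(n-r) = d_(n-r) A^D, where d_(n-r) <> 0 because
   rank B^2 = rank B: by Sylvester's identity on a rank factorization B = P Q,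
   d_(n-r) = det (Q P), and Q P is invertible. *)

Section CommRingDeterminants.
Variable R : comNzRingType.

Definition psub n (M : 'M[R]_n) (J : {set 'I_n}) : 'M[R]_#|J| :=
  \matrix_(p, q) M (enum_val p) (enum_val q).

Lemma det_reindex m k (h : 'I_k -> 'I_m) (M : 'M[R]_m) :
  injective h -> k = m -> \det (\matrix_(p, q) M (h p) (h q)) = \det M.
Proof.
move=> h_inj km; subst k.
pose s := perm h_inj.
have -> : \matrix_(p, q) M (h p) (h q) = row_perm s (col_perm s M).
  by apply/matrixP => p q; rewrite !mxE !permE.
rewrite row_permE col_permE !det_mulmx !det_perm odd_permV.
by rewrite mulrCA -signr_addb addbb mulr1.
Qed.

Definition keep_rows_mx n (M : 'M[R]_n) (J : {set 'I_n}) : 'M[R]_n :=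
  \matrix_(i, j) (if i \in J then M i j else (i == j)%:R).

Lemma det_keep_rows_mx n (M : 'M[R]_n) (J : {set 'I_n}) :
  \det (keep_rows_mx M J) = \det (psub M J).
Proof.
have card_split : (#|J| + #|~: J| = n)%N by rewrite cardsC card_ord.
pose h (p : 'I_(#|J| + #|~: J|)) : 'I_n :=
  match split p with
  | inl a => @enum_val _ (mem J) a
  | inr b => @enum_val _ (mem (~: J)) b
  end.
have notJ (b : 'I_#|~: J|) : (@enum_val _ (mem (~: J)) b \in J) = false.
  by have := @enum_valP _ (mem (~: J)) b; rewrite inE => /negPf.
have h_inj : injective h.
  move=> p q; rewrite /h -{2}[p]splitK -{2}[q]splitK.
  case: (split p) => a; case: (split q) => b.
  - by move/enum_val_inj ->.
  - by move=> E; have := @enum_valP _ (mem J) a; rewrite E notJ.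
  - by move=> E; have := @enum_valP _ (mem J) b; rewrite -E notJ.
  - by move/enum_val_inj ->.
rewrite -(det_reindex (keep_rows_mx M J) h_inj card_split).
set N := \matrix_(p, q) _; rewrite -[N]submxK.
have -> : dlsubmx N = 0.
  apply/matrixP => a b; rewrite !mxE /h (unsplitK (inl _)) (unsplitK (inr _)).
  rewrite notJ; case: eqP => // E.
  by have := @enum_valP _ (mem J) b; rewrite -E notJ.
have -> : drsubmx N = 1%:M.
  apply/matrixP => a b; rewrite !mxE /h !(unsplitK (inr _)).
  by rewrite notJ (inj_eq enum_val_inj).
have -> : ulsubmx N = psub M J.
  apply/matrixP => a b; rewrite !mxE /h !(unsplitK (inl _)).
  by rewrite (@enum_valP _ (mem J) a).
by rewrite det_ublock det1 mulr1.
Qed.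

Lemma det_diag_add n (d : 'rV[R]_n) (M : 'M[R]_n) :
  \det (diag_mx d + M) =
    \sum_(J : {set 'I_n}) (\prod_(i in ~: J) d 0 i) * \det (psub M J).
Proof.
under eq_bigr => J _ do rewrite -det_keep_rows_mx.
rewrite /determinant.
under eq_bigr => J _ do rewrite big_distrr /=.
rewrite exchange_big /=; apply: eq_bigr => s _.
under eq_bigr => i _ do rewrite !mxE addrC.
rewrite bigA_distr big_distrr /=; apply: eq_bigr => J _.
rewrite mulrCA; congr (_ * _).
rewrite (big_mkcond (fun i => i \in ~: J)) -big_split /=.
apply: eq_bigr => i _; rewrite !mxE inE.
by case: (i \in J); rewrite /= ?mul1r //; case: eqP; rewrite ?mulr1 ?mulr0 ?mulr1n ?mulr0n.
Qed.

Lemma det_scalar_add_mulmxC m k (x : R) (P : 'M[R]_(m, k)) (Q : 'M[R]_(k, m)) :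
  x ^+ k * \det (x%:M + P *m Q) = \det (x%:M + Q *m P) * x ^+ m.
Proof.
pose M := block_mx 1%:M (- Q) P (x%:M : 'M[R]_m).
pose L1 := block_mx 1%:M 0 (- P) (1%:M : 'M[R]_m).
pose L2 := block_mx (x%:M : 'M[R]_k) Q 0 (1%:M : 'M[R]_m).
have ML1 : L1 *m M = block_mx 1%:M (- Q) 0 (x%:M + P *m Q).
  rewrite mulmx_block !mul1mx !mul0mx !addr0 mulmx1 mulNmx mulmxN opprK addNr.
  by rewrite addrC.
have ML2 : L2 *m M = block_mx (x%:M + Q *m P) 0 P (x%:M).
  rewrite mulmx_block !mul1mx !mul0mx !add0r !mulmx1 mulmxN.
  by rewrite mul_scalar_mx mul_mx_scalar addNr.
have := congr1 determinant ML1; have := congr1 determinant ML2.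
rewrite !det_mulmx !det_ublock !det_lblock !det1 !det_scalar !mul1r !mulr1.
by move=> <- <-.
Qed.

End CommRingDeterminants.

Section AdjugateCoefficients.
Variables (F : fieldType) (n : nat).

Lemma psub_map_polyC (M : 'M[F]_n) (J : {set 'I_n}) :
  psub (map_mx polyC M) J = map_mx polyC (princ_sub M J).
Proof. by apply/matrixP => p q; rewrite !mxE. Qed.

Lemma coef_det_Xdiag (S : {set 'I_n}) (M : 'M[F]_n) m : (m <= n)%N ->
  (\det (diag_mx (\row_i (if i \in S then 0 else 'X)) + map_mx polyC M))`_(n - m) =
    \sum_(J : {set 'I_n} | (#|J| == m) && (S \subset J)) \det (princ_sub M J).
Proof.
move=> le_mn; rewrite det_diag_add coef_sum [RHS]big_mkcond /=.
apply: eq_bigr => J _; rewrite psub_map_polyC det_map_mx /=.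
case: (boolP (S \subset J)) => [sSJ | /subsetPn[i Si notJi]]; last first.
  by rewrite (bigD1 i) /= ?inE // mxE Si !mul0r coef0 andbF.
rewrite (eq_bigr (fun=> 'X)); last first.
  by move=> i; rewrite inE mxE; case: ifP => // /(subsetP sSJ) ->.
rewrite prodr_const mulrC coefCM coefXn andbT.
have cardCJ : #|~: J| = (n - #|J|)%N by rewrite cardsCs setCK card_ord.
have -> : (n - m == #|~: J|)%N = (#|J| == m).
  have := max_card J; rewrite card_ord cardCJ => le_Jn; apply/eqP/eqP; lia.
by case: eqP; rewrite ?mulr1 ?mulr0.
Qed.

Lemma det_princ_sub_rank (M : 'M[F]_n) (J : {set 'I_n}) :
  (\rank M < #|J|)%N -> \det (princ_sub M J) = 0.
Proof.
move=> lt_rank; apply/eqP; apply: contraTT lt_rank => /negbTE det_neq0.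
have : princ_sub M J \in unitmx by rewrite unitmxE unitfE det_neq0.
rewrite -row_full_unit /row_full -leqNgt => /eqP <-.
have -> : princ_sub M J = rowsub enum_val 1%:M *m M *m colsub enum_val 1%:M.
  rewrite mul_rowsub_mx mul1mx mulmx_colsub mulmx1.
  by apply/matrixP => p q; rewrite !mxE.
exact: leq_trans (mxrankM_maxl _ _) (mxrankM_maxr _ _).
Qed.

Variable B : 'M[F]_n.

Definition Xadd_mx : 'M[{poly F}]_n := 'X%:M + map_mx polyC B.

Definition adj_coef s : 'M[F]_n := \matrix_(a, b) (\adj Xadd_mx a b)`_s.

Definition adj_coef_prev s : 'M[F]_n := if s is s'.+1 then adj_coef s' else 0.

Lemma coef_det_Xadd m : (m <= n)%N ->
  (\det Xadd_mx)`_(n - m) =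
    \sum_(J : {set 'I_n} | #|J| == m) \det (princ_sub B J).
Proof.
move=> le_mn; have -> : Xadd_mx = diag_mx (\row_i (if i \in set0 then 0 else 'X))
                                   + map_mx polyC B.
  by apply/matrixP => p q; rewrite !mxE inE.
by rewrite coef_det_Xdiag //; apply: eq_bigl => J; rewrite sub0set andbT.
Qed.

Lemma sum_minors_row_repl (c : 'rV[F]_n) j m : (m <= n)%N ->
  \sum_(J : {set 'I_n} | (#|J| == m) && (j \in J)) \det (princ_sub (row_repl B j c) J) =
    (c *m adj_coef (n - m)) 0 j.
Proof.
move=> le_mn; pose X := \matrix_(p, q) if p == j then (c 0 q)%:P else Xadd_mx p q.
have XE : X = diag_mx (\row_i (if i \in [set j] then 0 else 'X))
              + map_mx polyC (row_repl B j c).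
  apply/matrixP => p q; rewrite !mxE inE.
  by case: (p == j); case: (p == q); rewrite ?add0r ?addr0 ?mulr1n ?mulr0n.
under eq_bigl => J do rewrite -sub1set.
rewrite -coef_det_Xdiag // -XE (expand_det_row X j) coef_sum mxE.
apply: eq_bigr => q _; rewrite !mxE eqxx coefCM; congr (_ * _).
suff -> : cofactor X j q = cofactor Xadd_mx j q by [].
rewrite /cofactor; congr (_ * \det _).
by apply/matrixP => a b; rewrite !mxE eq_sym (negPf (neq_lift _ _)).
Qed.

Lemma sum_minors_col_repl (c : 'cV[F]_n) i m : (m <= n)%N ->
  \sum_(J : {set 'I_n} | (#|J| == m) && (i \in J)) \det (princ_sub (col_repl B i c) J) =
    (adj_coef (n - m) *m c) i 0.
Proof.
move=> le_mn; pose X := \matrix_(p, q) if q == i then (c p 0)%:P else Xadd_mx p q.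
have XE : X = diag_mx (\row_p (if p \in [set i] then 0 else 'X))
              + map_mx polyC (col_repl B i c).
  apply/matrixP => p q; rewrite !mxE inE.
  case: (eqVneq q i) => [->|ne_qi]; first by case: (p == i); rewrite ?mulr0n add0r.
  by case: (eqVneq p q) => [->|]; rewrite ?(negPf ne_qi) ?mulr1n ?mulr0n.
under eq_bigl => J do rewrite -sub1set.
rewrite -coef_det_Xdiag // -XE (expand_det_col X i) coef_sum mxE.
apply: eq_bigr => p _; rewrite !mxE eqxx coefCM mulrC; congr (_ * _).
suff -> : cofactor X p i = cofactor Xadd_mx p i by [].
rewrite /cofactor; congr (_ * \det _).
by apply/matrixP => a b; rewrite !mxE eq_sym (negPf (neq_lift _ _)).
Qed.

Lemma adj_coef_recl s :
  adj_coef_prev s + B *m adj_coef s = ((\det Xadd_mx)`_s)%:M.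
Proof.
apply/matrixP => a b.
have := congr1 (fun M : 'M[{poly F}]_n => (M a b)`_s) (mul_mx_adj Xadd_mx).
rewrite /= {1}/Xadd_mx mulmxDl mul_scalar_mx !mxE coefD coefXM coefMn => <-.
congr (_ + _); first by case: s => [|s]; rewrite /= ?mxE.
by rewrite coef_sum; apply: eq_bigr => l _; rewrite !mxE coefCM.
Qed.

Lemma adj_coef_recr s :
  adj_coef_prev s + adj_coef s *m B = ((\det Xadd_mx)`_s)%:M.
Proof.
apply/matrixP => a b.
have := congr1 (fun M : 'M[{poly F}]_n => (M a b)`_s) (mul_adj_mx Xadd_mx).
rewrite /= {2}/Xadd_mx mulmxDr mul_mx_scalar !mxE coefD coefXM coefMn => <-.
congr (_ + _); first by case: s => [|s]; rewrite /= ?mxE.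
by rewrite coef_sum; apply: eq_bigr => l _; rewrite !mxE coefMC.
Qed.

Lemma coef_det_Xadd_lt_corank s :
  (s < n - \rank B)%N -> (\det Xadd_mx)`_s = 0.
Proof.
move=> lt_s; rewrite -(subKn (ltnW (leq_trans lt_s (leq_subr _ _)))).
rewrite coef_det_Xadd ?leq_subr //.
by rewrite big1 // => J /eqP cardJ; apply: det_princ_sub_rank; lia.
Qed.

Lemma adj_coef_prev_annihilated s : (s <= n - \rank B)%N ->
  B ^+ s *m adj_coef_prev s = 0 /\ adj_coef_prev s *m B ^+ s = 0.
Proof.
elim: s => [|s IH] le_s; first by rewrite mulmx0 mul0mx.
have [IHl IHr] := IH (ltnW le_s).
have recl := adj_coef_recl s; have recr := adj_coef_recr s.
rewrite coef_det_Xadd_lt_corank // raddf0 in recl recr.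
have BQ : B *m adj_coef s = - adj_coef_prev s by rewrite -(addKr (adj_coef_prev s) (B *m _)) recl addr0.
have QB : adj_coef s *m B = - adj_coef_prev s by rewrite -(addKr (adj_coef_prev s) (_ *m B)) recr addr0.
split.
  by rewrite exprSr -mulmxE -mulmxA BQ mulmxN IHl oppr0.
by rewrite exprS -mulmxE mulmxA QB mulNmx IHr oppr0.
Qed.

Lemma coef_det_Xadd_corank_neq0 :
  \rank (B *m B) = \rank B -> (\det Xadd_mx)`_(n - \rank B) != 0.
Proof.
move=> rank_sq.
(* Comparing the coefficients of x^n in Sylvester's identity for B = P Q. *)
set P := col_base B; set Q := row_base B.
have := det_scalar_add_mulmxC 'X (map_mx polyC P) (map_mx polyC Q).
rewrite -map_mxM mulmx_base -/Xadd_mx -map_mxM => sylvester.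
have := congr1 (fun p : {poly F} => p`_n) sylvester.
rewrite /= coefXnM coefMXn ltnn subnn ltnNge rank_leq_col /= => ->.
rewrite -horner_coef0 -horner_evalE -det_map_mx.
have -> : map_mx (horner_eval 0) ('X%:M + map_mx polyC (Q *m P)) = Q *m P.
  apply/matrixP => a b.
  by rewrite !mxE horner_evalE hornerD hornerMn hornerX hornerC mul0rn add0r.
rewrite -unitfE -unitmxE -row_full_unit /row_full eqn_leq rank_leq_row /=.
rewrite -{1}rank_sq -{1 2}(mulmx_base B) mulmxA.
by apply: leq_trans (mxrankM_maxl _ _) _; rewrite -mulmxA mxrankM_maxr.
Qed.

End AdjugateCoefficients.

Lemma expr_absorb_inverse (R : pzRingType) (a x : R) k :
  a ^+ k.+1 * x = a ^+ k -> forall t, a ^+ k = a ^+ (k + t) * x ^+ t.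
Proof.
move=> akx; elim=> [|t IH]; first by rewrite addn0 mulr1.
rewrite {1}IH -addSnnS [(k.+1 + t)%N]addnC [in RHS]exprD (exprS x) mulrA.
by rewrite -(mulrA (a ^+ t)) akx -exprD addnC.
Qed.

Lemma inner_inverse_expr (R : pzRingType) (a x : R) :
  GRing.comm a x -> x * a * x = x -> forall t, x = x ^+ t.+1 * a ^+ t.
Proof.
move=> ax xax.
have xaxt t : x * (x * a) ^+ t = x.
  by elim: t => [|t IH]; rewrite ?expr0 ?mulr1 // exprSr mulrA IH -ax mulrA xax.
by move=> t; rewrite exprS -mulrA -exprMn_comm ?xaxt.
Qed.

Section DrazinAdjugate.
Variables (F : fieldType) (n k : nat) (A X : 'M[F]_n).
Hypotheses (AkX : A ^+ k.+1 *m X = A ^+ k) (XAX : X *m A *m X = X)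
           (AXC : A *m X = X *m A).

Local Notation B := (A ^+ k.+1).
Local Notation u := (n - \rank B)%N.
Local Notation d := ((\det (Xadd_mx B))`_u).

Lemma drazin_mxrank_exp t : \rank (A ^+ (k + t)) = \rank (A ^+ k).
Proof.
apply/eqP; rewrite eqn_leq {1}addnC exprD -mulmxE mxrankM_maxr /=.
by rewrite {1}(expr_absorb_inverse AkX t) -mulmxE mxrankM_maxl.
Qed.

Lemma drazin_mxrank_sq : \rank (B *m B) = \rank B.
Proof.
by rewrite mulmxE -exprD addSnnS drazin_mxrank_exp -(addn1 k) drazin_mxrank_exp.
Qed.

Lemma drazin_adj_coef_prev :
  X *m adj_coef_prev B u = 0 /\ adj_coef_prev B u *m X = 0.
Proof.
have [BP PB] := adj_coef_prev_annihilated (leqnn u).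
have X_exp := inner_inverse_expr AXC XAX (k.+1 * u).
rewrite exprM in X_exp.
have XB : X = B ^+ u *m X ^+ (k.+1 * u).+1.
  have XB_comm : GRing.comm (X ^+ (k.+1 * u).+1) (B ^+ u).
    by apply/commrX/commrX/commr_sym/commrX.
  by rewrite {1}X_exp; exact: XB_comm.
by split; [rewrite X_exp -mulmxA BP | rewrite XB mulmxA PB]; rewrite ?mulmx0 ?mul0mx.
Qed.

Lemma drazin_adj_coefl : A ^+ k *m adj_coef B u = d *: X.
Proof.
have -> : A ^+ k = X *m B by rewrite -AkX; apply/commr_sym/commrX.
rewrite -mulmxA -[B *m _](addKr (adj_coef_prev B u)) adj_coef_recl.
by rewrite mulmxDr mulmxN (drazin_adj_coef_prev).1 oppr0 add0r mul_mx_scalar.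
Qed.

Lemma drazin_adj_coefr : adj_coef B u *m A ^+ k = d *: X.
Proof.
rewrite -AkX mulmxA -[_ *m B](addKr (adj_coef_prev B u)) adj_coef_recr.
by rewrite mulmxDl mulNmx (drazin_adj_coef_prev).2 oppr0 add0r mul_scalar_mx.
Qed.

End DrazinAdjugate.

Unset Implicit Arguments.
Local Open Scope complex_scope.
Theorem theorem2p7 (R : realType) (n : nat) (A AD : 'M[R[i]]_n) (k r : nat) :
  ind A = k ->
  \rank (A ^+ k.+1) = \rank (A ^+ k) ->
  \rank (A ^+ k) = r ->
  (r <= n)%N ->
  is_drazin A AD ->
  forall i j : 'I_n,
    AD i j =
      (\sum_(alpha : {set 'I_n} | (#|alpha| == r) && (j \in alpha))
          \det (princ_sub (row_repl (A ^+ k.+1) j (row i (A ^+ k))) alpha))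
      / (\sum_(alpha : {set 'I_n} | #|alpha| == r)
          \det (princ_sub (A ^+ k.+1) alpha))
    /\
    AD i j =
      (\sum_(beta : {set 'I_n} | (#|beta| == r) && (i \in beta))
          \det (princ_sub (col_repl (A ^+ k.+1) i (col j (A ^+ k))) beta))
      / (\sum_(beta : {set 'I_n} | #|beta| == r)
          \det (princ_sub (A ^+ k.+1) beta)).
Proof.
move=> <- rank_stable <- _ [AkX XAX AXC] i j.
have d_neq0 := coef_det_Xadd_corank_neq0 (drazin_mxrank_sq AkX).
rewrite -rank_stable -coef_det_Xadd ?rank_leq_row //.
rewrite sum_minors_row_repl ?sum_minors_col_repl ?rank_leq_row //.
rewrite -row_mul colE mulmxA -colE.
rewrite (drazin_adj_coefl AkX XAX AXC) (drazin_adj_coefr AkX XAX AXC) !mxE.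
by split; rewrite mulrC mulKf.
Qed.
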